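(* Let $H$ be an Abelian group, $X$ a simplicial set, $Z\subset X$ a simplicial subset with inclusion $i:Z\to X$, and $j:X\to X/Z$ the quotient map collapsing $Z$ to a point. Let $\beta:(X/Z)_2\to H$ be a normalized 2-cocycle, let $\eta$ be the $N(H)$-valued twisting function on $X/Z$ associated to $\beta$, and let $\eta|_X=\eta\circ j$. Let $\mathrm{sDist}_\eta(X/Z)$ be the set of twisted distributions on $\pi_\eta: N(H)\times_\eta X/Z\to X/Z$, and let $\mathrm{sDist}_\eta(X,0)$ be the set of twisted distributions $p$ on $N(H)\times_{\eta|_X}X\to X$ such that $p\circ i=\delta^{\varphi_0}$, where $\varphi_0(z)=(0,z)$ is the zero section over $Z$. Then there is a convex isomorphism (a bijection preserving convex combinations) \[ \mathrm{sDist}_\eta(X/Z)\cong \mathrm{sDist}_\eta(X,0). \]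
   Context: Distributions take values in $R=\mathbb{R}_{\ge 0}$: $D(S)$ is the set of finitely supported $p:S\to\mathbb{R}_{\ge0}$ with $\sum_s p(s)=1$, extended levelwise to simplicial sets. For a simplicial map $\pi:E\to Y$, a (twisted) distribution on $\pi$ is a simplicial map $p:Y\to D(E)$ with $D(\pi)\circ p=\delta$ ($\delta$ = delta distribution). $N(H)$ is the nerve of $H$: $N(H)_n=H^n$, $d_0$ drops the first entry, $d_n$ drops the last, $d_i(a_1,\dots,a_n)=(\dots,a_i+a_{i+1},\dots)$ for $0<i<n$, $s_j$ inserts $0$ after the $j$-th entry. A twisting function $\eta=\{\eta_n:Y_n\to N(H)_{n-1}\}$ defines the simplicial set $N(H)\times_\eta Y$ with simplices $N(H)_n\times Y_n$, faces $d_i(g,y)=(d_ig,d_iy)$ for $i>0$, $d_0(g,y)=(d_0g+\eta_n(y),d_0y)$, degeneracies componentwise. A normalized 2-cocycle is $\beta:Y_2\to H$ vanishing on degenerate simplices with $\beta(d_0\sigma)-\beta(d_1\sigma)+\beta(d_2\sigma)-\beta(d_3\sigma)=0$ for $\sigma\in Y_3$; its associated twisting function is $\eta_1=0$, $\eta_2=\beta$, $\eta_n(y)=\big(\beta(d_3\cdots d_n y),\ \eta_{n-1}(d_1y)-\eta_{n-1}(d_0y)\big)\in H\times H^{n-2}$. Since $j\circ i$ factors through a point, $\eta|_X$ vanishes on $Z$, so the restriction of $N(H)\times_{\eta|_X}X$ to $Z$ is $N(H)\times Z$ and $p\circ i$ is a distribution on it. *)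

From mathcomp Require Import all_boot all_algebra.
From mathcomp Require Import boolp classical_sets cardinality fsbigop reals.
Set Implicit Arguments. Unset Strict Implicit. Unset Printing Implicit Defensive.
Import GRing.Theory Num.Theory.
Local Open Scope ring_scope.
Local Open Scope classical_set_scope.

(* face n i : X_(n+1) -> X_n  is d_i (meaningful for i <= n+1),
   degen n j : X_n -> X_(n+1) is s_j (meaningful for j <= n).               *)
Record sdata := SData {
  sx :> nat -> choiceType;
  face : forall n : nat, nat -> sx n.+1 -> sx n;
  degen : forall n : nat, nat -> sx n -> sx n.+1 }.
Arguments face {s} n i _.
Arguments degen {s} n j _.

Definition isSSet (X : sdata) : Prop :=
  [/\ (forall n (x : X n.+2) i j, (i < j <= n.+2)%N ->
         face n i (face n.+1 j x) = face n j.-1 (face n.+1 i x)),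
      (forall n (x : X n) i j, (i <= j <= n)%N ->
         degen n.+1 i (degen n j x) = degen n.+1 j.+1 (degen n i x)),
      (forall n (x : X n.+1) i j, (i < j <= n.+1)%N ->
         face n.+1 i (degen n.+1 j x) = degen n j.-1 (face n i x)),
      (forall n (x : X n) j, (j <= n)%N ->
         face n j (degen n j x) = x /\ face n j.+1 (degen n j x) = x)
    & (forall n (x : X n.+1) i j, (j.+1 < i <= n.+2)%N ->
         face n.+1 i (degen n.+1 j x) = degen n j (face n i.-1 x))].

Definition subSSet (X : sdata) (Z : forall n, pred (X n)) : Prop :=
  (forall n i (x : X n.+1), (i <= n.+1)%N -> Z n.+1 x -> Z n (face n i x)) /\
  (forall n j (x : X n), (j <= n)%N -> Z n x -> Z n.+1 (degen n j x)).

(* (X/Z)_n = (X_n \ Z_n) + {*}; None is the collapsed point.                 *)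
Definition quot_carrier (X : sdata) (Z : forall n, pred (X n)) (n : nat) : choiceType :=
  Choice.clone (option {x : X n | ~~ Z n x}) _.

Definition quot (X : sdata) (Z : forall n, pred (X n)) : sdata :=
  @SData (quot_carrier Z)
    (fun n i o => obind (fun x => insub (face n i (val x))) o)
    (fun n j o => obind (fun x => insub (degen n j (val x))) o).

Definition qmap (X : sdata) (Z : forall n, pred (X n)) (n : nat) (x : X n) :
  quot Z n := insub x.

Section Nerve.
Variable H : zmodType.

(* N(H)_n = H^n, an n-tuple (a_1,...,a_n) stored 0-based *)
Definition NH (n : nat) := {ffun 'I_n -> H}.

Definition nget n (g : NH n) (k : nat) : H :=
  if insub k is Some o then g o else 0.

Definition nface n (i : nat) (g : NH n.+1) : NH n :=
  [ffun k : 'I_n => if (k.+1 < i)%N then nget g k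
                    else if k.+1 == i then nget g k + nget g k.+1
                    else nget g k.+1].

Definition ndegen n (j : nat) (g : NH n) : NH n.+1 :=
  [ffun k : 'I_n.+1 => if (k < j)%N then nget g k
                       else if k == j :> nat then 0 else nget g k.-1].

Definition nadd n (g h : NH n) : NH n := [ffun k => g k + h k].

Definition tprod (Y : sdata) (tw : forall n, Y n.+1 -> NH n) : sdata :=
  @SData (fun n => Choice.clone (NH n * Y n)%type _)
    (fun n i gy => if i == 0%N then (nadd (nface 0 gy.1) (tw n gy.2), face n 0 gy.2)
                   else (nface i gy.1, face n i gy.2))
    (fun n j gy => (ndegen j gy.1, degen n j gy.2)).

Definition tproj (Y : sdata) (tw : forall n, Y n.+1 -> NH n) n
  (gy : tprod tw n) : Y n := gy.2.

Definition normCocycle (Y : sdata) (beta : Y 2 -> H) : Prop :=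
  (forall (y : Y 1) j, (j <= 1)%N -> beta (degen 1 j y) = 0) /\
  (forall s : Y 3, beta (face 2 0 s) - beta (face 2 1 s)
                   + beta (face 2 2 s) - beta (face 2 3 s) = 0).

Fixpoint topfaces (Y : sdata) (k : nat) : Y k.+2 -> Y 2 :=
  match k return Y k.+2 -> Y 2 with
  | 0 => fun y => y
  | k'.+1 => fun y => @topfaces Y k' (face k'.+2 k'.+3 y)
  end.

Fixpoint etaL (Y : sdata) (beta : Y 2 -> H) (m : nat) : Y m.+1 -> seq H :=
  match m return Y m.+1 -> seq H with
  | 0 => fun _ => [::]
  | S m1 =>
    match m1 return (Y m1.+1 -> seq H) -> Y m1.+2 -> seq H with
    | 0 => fun _ y => [:: beta y]
    | S k => fun rec y =>
        beta (@topfaces Y k.+1 y) ::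
          [seq p.1 - p.2 | p <- zip (rec (face k.+2 1 y)) (rec (face k.+2 0 y))]
    end (@etaL Y beta m1)
  end.

(* eta n : Y_(n+1) -> N(H)_n  (this is eta_(n+1) of the paper) *)
Definition twf (Y : sdata) (beta : Y 2 -> H) (n : nat) (y : Y n.+1) : NH n :=
  [ffun k : 'I_n => nth 0 (@etaL Y beta n y) k].

End Nerve.

Section Dist.
Variable R : realType.

Definition isDist (S : choiceType) (p : S -> R) : Prop :=
  [/\ forall x, 0 <= p x, finite_set [set x | p x != 0]
    & \sum_(x \in [set: S]) p x = 1].

Definition push (S T : choiceType) (f : S -> T) (p : S -> R) : T -> R :=
  fun t => \sum_(x \in [set x | f x = t]) p x.

Definition delta (S : choiceType) (s : S) : S -> R := fun t => (t == s)%:R.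

(* twisted distributions on pi : E -> Y: simplicial maps p : Y -> D(E)
   with D(pi) o p = delta *)
Definition twDist (Y E : sdata) (pi : forall n, E n -> Y n)
    (p : forall n, Y n -> E n -> R) : Prop :=
  [/\ forall n y, isDist (p n y),
      forall n i (y : Y n.+1), (i <= n.+1)%N ->
        p n (face n i y) = push (face n i) (p n.+1 y),
      forall n j (y : Y n), (j <= n)%N ->
        p n.+1 (degen n j y) = push (degen n j) (p n y)
    & forall n y, push (@pi n) (p n y) = delta y].

Definition convcomb (Y E : sdata) (t : R) (p q : forall n, Y n -> E n -> R) :
  forall n, Y n -> E n -> R := fun n y e => t * p n y e + (1 - t) * q n y e.

Definition convex_iso (Y E Y' E' : sdata)
    (A : set (forall n, Y n -> E n -> R)) (B : set (forall n, Y' n -> E' n -> R))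
    (F : (forall n, Y n -> E n -> R) -> (forall n, Y' n -> E' n -> R)) : Prop :=
  [/\ forall p, A p -> B (F p),
      forall p q, A p -> A q -> F p = F q -> p = q,
      forall q, B q -> exists2 p, A p & F p = q
    & forall p q (t : R), A p -> A q -> 0 <= t <= 1 ->
        F (convcomb t p q) = convcomb t (F p) (F q)].

Definition sDistQ (H : zmodType) (X : sdata) (Z : forall n, pred (X n))
    (beta : quot Z 2 -> H) : set (forall n, quot Z n -> tprod (twf beta) n -> R) :=
  fun p => twDist (@tproj H _ (twf beta)) p.

Definition twX (H : zmodType) (X : sdata) (Z : forall n, pred (X n))
    (beta : quot Z 2 -> H) n (x : X n.+1) : NH H n := twf beta (qmap Z x).

Definition sDistX0 (H : zmodType) (X : sdata) (Z : forall n, pred (X n))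
    (beta : quot Z 2 -> H) : set (forall n, X n -> tprod (twX beta) n -> R) :=
  fun p => twDist (@tproj H _ (twX beta)) p /\
           forall n (z : X n), Z n z -> p n z = delta ((0 : NH H n), z).

End Dist.

From mathcomp Require Import all_boot all_algebra finmap.
From mathcomp Require Import boolp classical_sets cardinality fsbigop reals.
Set Implicit Arguments. Unset Strict Implicit. Unset Printing Implicit Defensive.
Import GRing.Theory Num.Theory.
Local Open Scope ring_scope.
Local Open Scope classical_set_scope.

(* A twisted distribution p over X/Z pulls back along j: over x it is p (j x)
   carried along the fibre bijection (g, j x) <-> (g, x) of the two twisted
   products, whose twistings agree since eta|_X = eta o j.  As beta is
   normalized, eta vanishes at the collapsed point *, so (0, * ) spans a
   simplicial subset of N(H) x_eta X/Z; since N(H)_0 is a point, every p is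
   the delta at (0, * ) over *, so its pullback is the zero-section delta over
   Z.  Conversely a distribution on X that is the zero section over Z descends
   to X/Z; the two constructions are mutually inverse fibrewise pushforwards,
   hence affine. *)

Section Pushforward.
Variable R : realType.
Implicit Types S T U : choiceType.

Definition supported_on S (p : S -> R) (r : seq S) :=
  forall x, x \notin r -> p x = 0.

Lemma pushE S T (f : S -> T) (p : S -> R) r t :
  uniq r -> supported_on p r -> push f p t = \sum_(x <- r | f x == t) p x.
Proof.
move=> ur pr; rewrite bigfs //; last by move=> x _ /pr.
by congr (\sum_(x \in _) _); apply/seteqP; split=> x /= /eqP.
Qed.

Lemma push_supported S T (f : S -> T) (p : S -> R) r :
  uniq r -> supported_on p r -> supported_on (push f p) (undup (map f r)).
Proof.
move=> ur pr y; rewrite mem_undup => yNfr; rewrite (pushE _ _ ur pr).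
rewrite big1_seq // => x /andP[/eqP fx xr]; case/negP: yNfr.
by rewrite -fx map_f.
Qed.

Lemma dist_supported S (p : S -> R) :
  isDist p -> exists2 r, uniq r & supported_on p r.
Proof.
case=> _ finp _; exists (fset_set [set x | p x != 0]); first exact: fset_uniq.
move=> x; rewrite (in_fset_set finp) => xNsupp.
by apply/eqP; apply: contraNT xNsupp => px; apply/mem_set.
Qed.

Lemma push_comp S T U (f : S -> T) (g : T -> U) (p : S -> R) :
  isDist p -> push g (push f p) = push (g \o f) p.
Proof.
case/dist_supported=> r ur pr; apply/funext => u.
rewrite (pushE _ _ (undup_uniq _) (push_supported (f := f) ur pr)).
rewrite (pushE _ _ ur pr).
under eq_bigr do rewrite (pushE _ _ ur pr) big_mkcond /=.
rewrite exchange_big /= [RHS]big_mkcond /=; apply: eq_big_seq => x xr.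
have fxr : f x \in undup (map f r) by rewrite mem_undup map_f.
rewrite big_mkcond /= (bigD1_seq (f x) fxr (undup_uniq _)) /= eqxx.
rewrite big1 ?addr0; first by case: ifP.
by move=> y yNfx; case: ifP => // _; case: eqP => // fxy; rewrite fxy eqxx in yNfx.
Qed.

Lemma eq_push S T (f g : S -> T) (p : S -> R) : f =1 g -> push f p = push g p.
Proof. by move=> /funext ->. Qed.

Lemma push_compE S T U (f : S -> T) (g : T -> U) (h : S -> U) (p : S -> R) :
  isDist p -> g \o f =1 h -> push g (push f p) = push h p.
Proof. by move=> dp gfh; rewrite push_comp // (eq_push _ gfh). Qed.

Lemma isDist_push S T (f : S -> T) (p : S -> R) : isDist p -> isDist (push f p).
Proof.
move=> dp; have [r ur pr] := dist_supported dp; case: (dp) => p_ge0 _ p1; split.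
- by move=> t; apply: fsumr_ge0 => x _; apply: p_ge0.
- apply: (sub_finite_set _ (finite_seq (undup (map f r)))) => t /= pt.
  by apply: contraNT pt => tNr; apply/eqP; apply: (push_supported (f := f) ur pr).
- have total_mass U (q : U -> R) : \sum_(x \in [set: U]) q x = push (fun=> tt) q tt.
    by congr (\sum_(x \in _) _); apply/seteqP; split.
  by rewrite total_mass push_comp // -total_mass.
Qed.

Lemma push_delta S T (f : S -> T) (s : S) : push f (delta R s) = delta R (f s).
Proof.
apply/funext => t; rewrite (@pushE _ _ f _ [:: s]) //; last first.
  by move=> x; rewrite inE /delta => /negbTE ->.
by rewrite big_cons big_nil addr0 /delta eqxx eq_sym; case: eqP.
Qed.

Lemma isDist_delta S (s : S) : isDist (delta R s).
Proof.
split=> [x||]; first by rewrite /delta ler0n.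
  apply: (sub_finite_set _ (finite_set1 s)) => x /=.
  by rewrite /delta; case: (x =P s) => // _; rewrite mulr0n eqxx.
rewrite -(fsbig_widen [set s]) //; first by rewrite fsbig_set1 /delta eqxx.
by move=> x [_ /= xNs]; rewrite /delta; case: eqP.
Qed.

Lemma push_neq0 S T (f : S -> T) (p : S -> R) t :
  push f p t != 0 -> exists2 x, f x = t & p x != 0.
Proof. by move/(@fsbigN1 _ _ _ unit S _ (fun _ x => p x) tt). Qed.

Lemma push_id_on S (f : S -> S) (p : S -> R) :
  (forall x, p x != 0 -> f x = x) -> push f p = p.
Proof.
move=> fid; apply/funext => t.
have [ftt|ftNt] := eqVneq (f t) t.
  rewrite /push -(fsbig_widen [set t]) ?fsbig_set1 //=; first by move=> x ->.
  move=> x [/= fxt xNt]; apply: contra_notP xNt => /eqP px.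
  by rewrite -fxt fid.
have pt0 : p t = 0 by apply/eqP; apply: contraNT ftNt => /fid ->.
rewrite pt0; apply/eqP; apply: contraNT ftNt => /push_neq0[x <-] px.
by rewrite !fid.
Qed.

Lemma push_delta_supp S T (f : S -> T) (p : S -> R) t :
  isDist p -> push f p = delta R t -> forall x, p x != 0 -> f x = t.
Proof.
move=> dp pfp x px; have [r ur pr] := dist_supported dp; case: dp => p_ge0 _ _.
have xr : x \in r by apply: contraNT px => /pr ->.
have : 0 < push f p (f x).
  rewrite (pushE _ _ ur pr) big_mkcond /= (bigD1_seq x) //= eqxx.
  rewrite ltr_pwDl ?lt0r ?px ?p_ge0 //.
  by apply: sumr_ge0 => y _; case: ifP.
by rewrite pfp /delta ltr0n; case: eqP.
Qed.

Lemma dist_supp1 S (p : S -> R) t :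
  isDist p -> (forall x, p x != 0 -> x = t) -> p = delta R t.
Proof.
move=> dp pt; have pt1 : p t = 1.
  case: dp => _ _ <-; rewrite -(fsbig_widen [set t]) ?fsbig_set1 //.
  by move=> x [_ /= xNt]; apply: contra_notP xNt => /eqP /pt.
apply/funext => x; rewrite /delta; case: eqP => [->//|xNt].
by apply: contra_notP xNt => /eqP /pt.
Qed.

Lemma push_convex S T (f : S -> T) (p q : S -> R) (t : R) :
  isDist p -> isDist q ->
  push f (fun x => t * p x + (1 - t) * q x) =
  (fun y => t * push f p y + (1 - t) * push f q y).
Proof.
move=> /dist_supported[rp urp prp] /dist_supported[rq urq prq].
set r := undup (rp ++ rq); have ur : uniq r := undup_uniq _.
have pr : supported_on p r.
  by move=> x; rewrite mem_undup mem_cat negb_or => /andP[/prp].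
have qr : supported_on q r.
  by move=> x; rewrite mem_undup mem_cat negb_or => /andP[_ /prq].
have cr : supported_on (fun x => t * p x + (1 - t) * q x) r.
  by move=> x xNr; rewrite pr // qr // !mulr0 addr0.
by apply/funext => y; rewrite !(pushE _ _ ur) // big_split /= -!mulr_sumr.
Qed.

End Pushforward.

Section Nerve.
Variable H : zmodType.

Lemma nget0 n k : nget (0 : NH H n) k = 0.
Proof. by rewrite /nget; case: insub => // o; rewrite ffunE. Qed.

Lemma nface0 n i : nface i (0 : NH H n.+1) = 0.
Proof. by apply/ffunP => k; rewrite !ffunE !nget0 addr0 !if_same. Qed.

Lemma ndegen0 n j : ndegen j (0 : NH H n) = 0.
Proof. by apply/ffunP => k; rewrite !ffunE !nget0 !if_same. Qed.

Lemma tproj_face (Y : sdata) (tw : forall n, Y n.+1 -> NH H n) n i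
    (e : tprod tw n.+1) : (face n i e).2 = face n i e.2.
Proof. by rewrite /=; case: eqP => [->|]. Qed.

End Nerve.

Section Quotient.
Variables (X : sdata) (Z : forall n, pred (X n)).
Arguments Z : clear implicits.
Hypothesis subZ : subSSet Z.

Lemma qmap_face n i (x : X n.+1) :
  (i <= n.+1)%N -> face n i (qmap Z x) = qmap Z (face n i x).
Proof.
move=> le_i; rewrite /qmap /=; case: insubP => [u _ <-//|] /=.
by rewrite negbK => Zx; rewrite insubN // negbK; apply: subZ.1.
Qed.

Lemma qmap_degen n j (x : X n) :
  (j <= n)%N -> degen n j (qmap Z x) = qmap Z (degen n j x).
Proof.
move=> le_j; rewrite /qmap /=; case: insubP => [u _ <-//|] /=.
by rewrite negbK => Zx; rewrite insubN // negbK; apply: subZ.2.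
Qed.

Lemma qmap_val n (u : {x : X n | ~~ Z n x}) : qmap Z (val u) = Some u.
Proof. by rewrite /qmap valK. Qed.

Lemma qmap_Z n (x : X n) : Z n x -> qmap Z x = None.
Proof. by move=> Zx; rewrite /qmap insubN // negbK. Qed.

Variables (H : zmodType) (beta : quot Z 2 -> H).
Hypothesis beta_base : beta None = 0.

Lemma topfaces_base k : @topfaces (quot Z) k None = None.
Proof. by elim: k. Qed.

Lemma etaL_base m : etaL beta (None : quot Z m.+1) = nseq m 0.
Proof.
have sub_nseq l : [seq p.1 - p.2 | p <- zip (nseq l 0) (nseq l 0)] = nseq l (0 : H).
  by elim: l => //= l ->; rewrite subr0.
elim: m => [//|[|k] IH]; first by rewrite /= beta_base.
rewrite -[LHS]/(beta (topfaces (None : quot Z k.+3)) :: [seq p.1 - p.2 | p <- zip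
  (etaL beta (None : quot Z k.+2)) (etaL beta (None : quot Z k.+2))]).
by rewrite topfaces_base beta_base IH sub_nseq.
Qed.

Lemma twf_base n : twf beta (None : quot Z n.+1) = 0.
Proof. by apply/ffunP => k; rewrite !ffunE etaL_base nth_nseq if_same. Qed.

End Quotient.

Lemma twDist_supp (R : realType) (Y E : sdata) (pi : forall n, E n -> Y n) p n y e :
  @twDist R Y E pi p -> p n y e != 0 -> pi n e = y.
Proof. by case=> dp _ _ pip; apply: (push_delta_supp (dp n y) (pip n y)). Qed.

Section Descent.
Variables (X : sdata) (Z : forall n, pred (X n)).
Arguments Z : clear implicits.
Variables (H : zmodType) (beta : quot Z 2 -> H) (R : realType).
Hypotheses (subZ : subSSet Z) (beta_base : beta None = 0).

Notation EX n := (tprod (twX beta) n).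
Notation EQ n := (tprod (twf beta) n).
Notation base n := ((0, None) : EQ n).

Definition tqmap n (e : EX n) : EQ n := (e.1, qmap Z e.2).

Definition tlift n (x : X n) (e : EQ n) : EX n := (e.1, x).

Lemma tqmap_face n i (e : EX n.+1) :
  (i <= n.+1)%N -> tqmap (face n i e) = face n i (tqmap e).
Proof. by move=> le_i; rewrite /tqmap /=; case: ifP; rewrite /= -qmap_face. Qed.

Lemma tqmap_degen n j (e : EX n) :
  (j <= n)%N -> tqmap (degen n j e) = degen n j (tqmap e).
Proof. by move=> le_j; rewrite /tqmap /= -qmap_degen. Qed.

Lemma face_base n i : face n i (base n.+1) = base n.
Proof.
rewrite /=; case: ifP => _; rewrite nface0 // twf_base //.
by congr pair; apply/ffunP => k; rewrite !ffunE addr0.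
Qed.

Lemma degen_base n j : degen n j (base n) = base n.+1.
Proof. by rewrite /= ndegen0. Qed.

Lemma push_tqmap_tlift n (x : X n) (r : EQ n -> R) : isDist r ->
  (forall e, r e != 0 -> e.2 = qmap Z x) -> push (@tqmap n) (push (tlift x) r) = r.
Proof.
move=> dr rx; rewrite (push_compE (h := @tqmap n \o tlift x) dr) // push_id_on //.
by move=> [g y] /rx /= ->.
Qed.

Lemma push_tlift_tqmap n (x : X n) (r : EX n -> R) : isDist r ->
  (forall e, r e != 0 -> e.2 = x) -> push (tlift x) (push (@tqmap n) r) = r.
Proof.
move=> dr rx; rewrite (push_compE (h := tlift x \o @tqmap n) dr) // push_id_on //.
by move=> [g y] /rx /= ->.
Qed.

Lemma fiber_dist_eq n (x : X n) (a b : EX n -> R) : isDist a -> isDist b ->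
  (forall e, a e != 0 -> e.2 = x) -> (forall e, b e != 0 -> e.2 = x) ->
  push (@tqmap n) a = push (@tqmap n) b -> a = b.
Proof.
move=> da db ax bx eq_ab.
by rewrite -(push_tlift_tqmap da ax) -(push_tlift_tqmap db bx) eq_ab.
Qed.

Definition pullback (p : forall n, quot Z n -> EQ n -> R) :
  forall n, X n -> EX n -> R :=
  fun n x => push (tlift x) (p n (qmap Z x)).
Arguments pullback p n x : clear implicits.

Definition descend (q : forall n, X n -> EX n -> R) :
  forall n, quot Z n -> EQ n -> R :=
  fun n y => if y is Some u then push (@tqmap n) (q n (val u)) else delta R (base n).
Arguments descend q n y : clear implicits.

Lemma sDistQ_base p n : sDistQ p -> p n None = delta R (base n).
Proof.
move=> Ap; have [_ _ p_degen _] := Ap; elim: n => [|n IH].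
  apply: dist_supp1 => [|[g y] /(twDist_supp Ap) /= ->]; first by case: Ap.
  by congr pair; apply/ffunP => -[].
by rewrite -[None]/(degen n 0 (None : quot Z n)) p_degen // IH push_delta degen_base.
Qed.

Lemma pullback_op m1 m2 (fX : X m1 -> X m2) (fQ : quot Z m1 -> quot Z m2)
    (fE : EX m1 -> EX m2) (fEQ : EQ m1 -> EQ m2) p : sDistQ p ->
  (forall x, qmap Z (fX x) = fQ (qmap Z x)) -> @tqmap m2 \o fE =1 fEQ \o @tqmap m1 ->
  (forall e, (fE e).2 = fX e.2) -> (forall y, p m2 (fQ y) = push fEQ (p m1 y)) ->
  forall x, pullback p m2 (fX x) = push fE (pullback p m1 x).
Proof.
move=> Ap qmap_fX tqmap_fE fE2 p_fQ x.
have [dp _ _ _] := Ap; have p_fiber := twDist_supp Ap.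
apply: (fiber_dist_eq (x := fX x)).
- exact/isDist_push.
- exact/isDist_push/isDist_push.
- by move=> e /push_neq0[e' <-].
- by move=> e /push_neq0[e' <- /push_neq0[e'' <- _]]; rewrite fE2.
rewrite push_tqmap_tlift // => [|e /p_fiber //].
have dpx : isDist (pullback p m1 x) by apply/isDist_push.
rewrite qmap_fX p_fQ (push_compE dpx tqmap_fE) -push_comp //.
by rewrite push_tqmap_tlift // => e /p_fiber.
Qed.

Lemma pullback_sDistX0 p : sDistQ p -> sDistX0 (pullback p).
Proof.
move=> Ap; have [dp p_face p_degen _] := Ap; split; first split.
- by move=> n x; apply/isDist_push.
- move=> n i x le_i; apply: (pullback_op (fQ := face n i) (fEQ := face n i)) => //.
  + by move=> y; rewrite qmap_face.
  + by move=> e /=; rewrite tqmap_face.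
  + by move=> e; rewrite tproj_face.
  + by move=> y; rewrite p_face.
- move=> n j x le_j; apply: (pullback_op (fQ := degen n j) (fEQ := degen n j)) => //.
  + by move=> y; rewrite qmap_degen.
  + by move=> e /=; rewrite tqmap_degen.
  + by move=> y; rewrite p_degen.
- move=> n x; apply: dist_supp1; first exact/isDist_push/isDist_push.
  by move=> e /push_neq0[e' <- /push_neq0[e'' <-]].
- by move=> n z Zz; rewrite /pullback qmap_Z // sDistQ_base // push_delta.
Qed.

Lemma pullback_inj p q : sDistQ p -> sDistQ q -> pullback p = pullback q -> p = q.
Proof.
move=> Ap Aq eq_pq; apply: functional_extensionality_dep => n.
apply/funext => -[u|]; last by rewrite !sDistQ_base.
have pullbackK r : sDistQ r -> push (@tqmap n) (pullback r n (val u)) = r n (Some u).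
  move=> Ar; have [dr _ _ _] := Ar.
  by rewrite push_tqmap_tlift qmap_val // => e /(twDist_supp Ar).
by rewrite -pullbackK // eq_pq pullbackK.
Qed.

Lemma descend_qmap q n (x : X n) :
  sDistX0 q -> descend q n (qmap Z x) = push (@tqmap n) (q n x).
Proof.
move=> Bq; rewrite {1}/qmap; case: insubP => [u _ <-//|] /=.
by rewrite negbK => Zx; rewrite Bq.2 // push_delta /tqmap /= qmap_Z.
Qed.

Lemma descend_op m1 m2 (fX : X m1 -> X m2) (fQ : quot Z m1 -> quot Z m2)
    (fE : EX m1 -> EX m2) (fEQ : EQ m1 -> EQ m2) q : sDistX0 q ->
  (forall x, qmap Z (fX x) = fQ (qmap Z x)) -> @tqmap m2 \o fE =1 fEQ \o @tqmap m1 ->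
  fQ None = None -> fEQ (base m1) = base m2 ->
  (forall x, q m2 (fX x) = push fE (q m1 x)) ->
  forall y, descend q m2 (fQ y) = push fEQ (descend q m1 y).
Proof.
move=> Bq qmap_fX tqmap_fE fQ_base fEQ_base q_fX [u|]; last first.
  by rewrite fQ_base /= push_delta fEQ_base.
have [[dq _ _ _] _] := Bq.
rewrite -qmap_val -qmap_fX !descend_qmap // q_fX.
by rewrite (push_compE _ tqmap_fE) // push_comp.
Qed.

Lemma descend_sDistQ q : sDistX0 q -> sDistQ (descend q).
Proof.
move=> Bq; have [[dq q_face q_degen q_proj] _] := Bq; split.
- by move=> n [u|]; [apply/isDist_push/dq | apply: isDist_delta].
- move=> n i y le_i; apply: (descend_op (fX := face n i) (fE := face n i)) => //.
  + by move=> x; rewrite qmap_face.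
  + by move=> e /=; rewrite tqmap_face.
  + exact: face_base.
  + by move=> x; rewrite q_face.
- move=> n j y le_j; apply: (descend_op (fX := degen n j) (fE := degen n j)) => //.
  + by move=> x; rewrite qmap_degen.
  + by move=> e /=; rewrite tqmap_degen.
  + exact: degen_base.
  + by move=> x; rewrite q_degen.
- move=> n [u|] /=; last by rewrite push_delta.
  have proj_tqmap : @tproj _ _ (twf beta) n \o @tqmap n =1 @qmap X Z n \o @tproj _ _ _ n.
    by [].
  by rewrite (push_compE _ proj_tqmap) // -push_comp // q_proj push_delta qmap_val.
Qed.

Lemma descendK q : sDistX0 q -> pullback (descend q) = q.
Proof.
move=> Bq; have [[dq _ _ _] _] := Bq.
apply: functional_extensionality_dep => n; apply/funext => x.
rewrite /pullback descend_qmap // push_tlift_tqmap // => e.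
exact: (twDist_supp Bq.1).
Qed.

Lemma pullback_convcomb p q t : sDistQ p -> sDistQ q ->
  pullback (convcomb t p q) = convcomb t (pullback p) (pullback q).
Proof.
move=> [dp _ _ _] [dq _ _ _]; apply: functional_extensionality_dep => n.
by apply/funext => x; rewrite /pullback /convcomb push_convex.
Qed.

End Descent.

Theorem mainTheorem2 (R : realType) (H : zmodType) (X : sdata)
    (Z : forall n, pred (X n)) (beta : quot Z 2 -> H) :
  isSSet X -> subSSet Z -> normCocycle beta ->
  exists F : (forall n, quot Z n -> tprod (twf beta) n -> R) ->
             (forall n, X n -> tprod (twX beta) n -> R),
    convex_iso (@sDistQ R _ _ _ beta) (@sDistX0 R _ _ _ beta) F.
Proof.
move=> _ subZ [beta_norm _].
have beta_base : beta None = 0 by apply: (beta_norm None 0).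
exists (@pullback X Z H beta R); split.
- exact: pullback_sDistX0.
- exact: pullback_inj.
- by move=> q Bq; exists (descend q); [exact: descend_sDistQ | exact: descendK].
- by move=> p q t Ap Aq _; exact: pullback_convcomb.
Qed.
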